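(* Let $H,H'\le F_N$ be nontrivial finitely generated subgroups with $H=\mathrm{Comm}_{F_N}(H)$ and $H'=\mathrm{Comm}_{F_N}(H')$. Then $\eta_H=\eta_{H'}$ if and only if $H$ and $H'$ are conjugate in $F_N$.
   Context: $\mathfrak C_N$ is the set of closed subsets of $\partial F_N$ with at least two points. For a nontrivial subgroup $H$, $\Lambda(H)\subseteq\partial F_N$ is its limit set (limits of sequences in $H$); $\mathrm{Comm}_{F_N}(H)=\{g:[H:H\cap gHg^{-1}]<\infty,\ [gHg^{-1}:H\cap gHg^{-1}]<\infty\}$. For finitely generated nontrivial $H=\mathrm{Comm}_{F_N}(H)$, $\eta_H=\sum_{H_1\text{ conjugate to }H}\delta_{\Lambda(H_1)}$, a measure on $\mathfrak C_N$. *)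

From HB Require Import structures.
From mathcomp Require Import all_boot all_order all_algebra.
From mathcomp Require Import all_classical all_reals.
From mathcomp Require Import ereal topology esum.
From mathcomp Require Import Rstruct.
Set Implicit Arguments.
Unset Strict Implicit.
Unset Printing Implicit Defensive.
Import Order.TTheory GRing.Theory Num.Theory.
Local Open Scope classical_set_scope.

(* letters: a generator index together with a sign (true = inverse) *)
Definition letter (N : nat) := ('I_N * bool)%type.
Definition linv N (x : letter N) : letter N := (x.1, ~~ x.2).

Definition reduced N (w : seq (letter N)) : bool :=
  sorted (fun x y => y != linv x) w.

Definition cons_red N (x : letter N) (w : seq (letter N)) : seq (letter N) :=
  if w is y :: w' then (if y == linv x then w' else x :: w) else [:: x].
Definition reduce N (w : seq (letter N)) : seq (letter N) :=
  foldr (@cons_red N) [::] w.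

Lemma cons_red_reduced N (x : letter N) w : reduced w -> reduced (cons_red x w).
Proof.
case: w => [|y w] //= Hw.
case: ifP => Hy; first by move: Hw; rewrite /reduced; case: w => //= z w /andP[].
by rewrite /reduced /= Hy.
Qed.

Lemma reduce_reduced N (w : seq (letter N)) : reduced (reduce w).
Proof. by elim: w => [|x w IH] //=; apply: cons_red_reduced. Qed.

Definition FN (N : nat) := {w : seq (letter N) | reduced w}.

Definition oneF N : FN N := exist _ [::] (erefl true).
Definition mulF N (u v : FN N) : FN N :=
  exist _ (reduce (proj1_sig u ++ proj1_sig v)) (reduce_reduced _).
Definition invF N (u : FN N) : FN N :=
  exist _ (reduce (rev (map (@linv N) (proj1_sig u)))) (reduce_reduced _).

Definition subgroup N (H : set (FN N)) : Prop :=
  H (oneF N) /\ forall x y, H x -> H y -> H (mulF x (invF y)).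

Definition generated N (S : seq (FN N)) : set (FN N) :=
  [set x | forall K, subgroup K -> (forall s, List.In s S -> K s) -> K x].

Definition fin_gen N (H : set (FN N)) : Prop :=
  exists S : seq (FN N), H = generated S.

Definition nontrivial N (H : set (FN N)) : Prop :=
  exists h, H h /\ h <> oneF N.

Definition conjS N (g : FN N) (H : set (FN N)) : set (FN N) :=
  [set mulF (mulF g h) (invF g) | h in H].

(* [H : K] < oo  (for K a subgroup of H): H is covered by finitely many
   left cosets x K with x in H *)
Definition finite_index N (K H : set (FN N)) : Prop :=
  exists s : seq (FN N), (forall x, List.In x s -> H x) /\
    forall h, H h -> exists x, List.In x s /\ exists k, K k /\ h = mulF x k.

Definition Comm N (H : set (FN N)) : set (FN N) :=
  [set g | finite_index (H `&` conjS g H) H /\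
           finite_index (H `&` conjS g H) (conjS g H)].

Definition bdry (N : nat) :=
  {xi : nat -> letter N | forall n, xi n.+1 != linv (xi n)}.

(* convergence of a sequence of elements of F_N to a boundary point
   (topology of F_N \cup \partial F_N: agreement on longer and longer prefixes) *)
Definition conv_bd N (h : nat -> FN N) (xi : bdry N) : Prop :=
  forall k, exists n0, forall n, (n0 <= n)%N ->
    take k (proj1_sig (h n)) = mkseq (proj1_sig xi) k.

Definition limset N (H : set (FN N)) : set (bdry N) :=
  [set xi | exists h : nat -> FN N, (forall n, H (h n)) /\ conv_bd h xi].

(* closed subsets of \partial F_N (cylinder topology) *)
Definition closedB N (C : set (bdry N)) : Prop :=
  forall xi : bdry N,
    (forall k, exists e, C e /\ forall i, (i < k)%N -> proj1_sig e i = proj1_sig xi i) ->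
    C xi.

Definition CN N : set (set (bdry N)) :=
  [set C | closedB C /\ exists a b, C a /\ C b /\ a <> b].

(* eta_H = sum over conjugates H1 of H of the Dirac mass at Lambda(H1),
   evaluated on a set A of closed subsets *)
Definition eta N (H : set (FN N)) (A : set (set (bdry N))) : \bar Rdefinitions.R :=
  (\esum_(K in [set K | exists g : FN N, K = conjS g H])
      ((if `[< A (limset K) >] then 1 else 0 : Rdefinitions.R)%:E))%R.

From Pilot Require Import Defs.
From mathcomp Require Import all_boot all_order all_algebra.
From mathcomp Require Import all_classical all_reals.
From mathcomp Require Import ereal topology esum.
From mathcomp Require Import Rstruct.

(* If [eta_H = eta_H'], evaluating both measures on the singleton {Lambda(H)}
   (a point of C_N: Lambda(H) is closed and contains the two ends of the axis
   of any nontrivial element) yields [Lambda(H) = Lambda(K)] with [K = g H' g^-1].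
   Equal limit sets force commensurability. Write a nontrivial element of H as
   [u c u^-1] with [c] cyclically reduced; for [h] in [H] one of the rays
   [h u c^oo], [h u c^-oo] lies in Lambda(H), hence in Lambda(K), so the
   reduced word of [h u] is a prefix of some element of [K]. Prefixes of the
   elements of the finitely generated [K] lie in finitely many sets [K q], so
   [H] meets finitely many cosets [K q u^-1] and [H ∩ K] has finite index in
   [H]; symmetrically in [K]. A subgroup equal to its commensurator contains
   every subgroup commensurable with it, which gives [K = H]. *)

Local Open Scope classical_set_scope.
Local Notation invF := Defs.invF.
Set Implicit Arguments.
Unset Strict Implicit.
Unset Printing Implicit Defensive.

Section Words.
Variable N : nat.
Implicit Types (x y : letter N) (u v w : seq (letter N)).

Lemma linvK x : linv (linv x) = x.
Proof. by case: x => i b; rewrite /linv /= negbK. Qed.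

Lemma linv_neq x : (x == linv x) = false.
Proof. by case: x => i b; rewrite /linv /= xpair_eqE eqxx /=; case: b. Qed.

Lemma linv_inj : injective (@linv N).
Proof. exact: can_inj linvK. Qed.

Lemma eq_linvC x y : (y == linv x) = (x == linv y).
Proof. by apply/eqP/eqP => ->; rewrite linvK. Qed.

Lemma reduced_cons x w :
  reduced (x :: w) = (if w is y :: _ then y != linv x else true) && reduced w.
Proof. by case: w. Qed.

Lemma reduced_prefix u v : reduced (u ++ v) -> reduced u.
Proof. by case/cat_sorted2. Qed.

Lemma reduced_suffix u v : reduced (u ++ v) -> reduced v.
Proof. by case/cat_sorted2. Qed.

Lemma reduce_id w : reduced w -> reduce w = w.
Proof.
elim: w => // x w IH; rewrite reduced_cons => /andP[Hx Hw]; rewrite /= IH //.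
by case: w Hx {IH Hw} => //= y w /negbTE ->.
Qed.

Lemma cons_redK x w : reduced w -> cons_red x (cons_red (linv x) w) = w.
Proof.
case: w => [|y w] Hw; first by rewrite /= eqxx.
rewrite /= linvK; case: eqP => [<-|_]; last by rewrite /= eqxx.
by case: w Hw => // z w; rewrite reduced_cons => /andP[/negbTE /= ->].
Qed.

Lemma foldr_cons_red_reduced u v : reduced v -> reduced (foldr (@cons_red N) v u).
Proof. by elim: u => //= x u IH Hv; apply/cons_red_reduced/IH. Qed.

Lemma reduce_cat u v : reduce (u ++ v) = foldr (@cons_red N) (reduce v) u.
Proof. exact: foldr_cat. Qed.

Lemma foldr_cons_red_reduce u v :
  reduced v -> foldr (@cons_red N) v (reduce u) = foldr (@cons_red N) v u.
Proof.
move=> Hv; elim: u => //= x u <-.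
case E: (reduce u) => [|y r] //=; case: eqP => [Ey|] //=.
have Hr : reduced (foldr (@cons_red N) v r).
  by apply: foldr_cons_red_reduced.
by rewrite Ey cons_redK.
Qed.

Lemma reduce_catr u v : reduce (u ++ reduce v) = reduce (u ++ v).
Proof. by rewrite !reduce_cat reduce_id // reduce_reduced. Qed.

Lemma reduce_catl u v : reduce (reduce u ++ v) = reduce (u ++ v).
Proof. by rewrite !reduce_cat foldr_cons_red_reduce // reduce_reduced. Qed.

Definition winv w := rev (map (@linv N) w).

Lemma winvK : involutive winv.
Proof.
by move=> w; rewrite /winv map_rev revK -map_comp map_id_in // => x _ /=; rewrite linvK.
Qed.

Lemma winv_cat u v : winv (u ++ v) = winv v ++ winv u.
Proof. by rewrite /winv map_cat rev_cat. Qed.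

Lemma winv_cons x u : winv (x :: u) = rcons (winv u) (linv x).
Proof. by rewrite /winv /= rev_cons. Qed.

Lemma winv_last x u : winv (x :: u) = linv (last x u) :: winv (belast x u).
Proof. by rewrite lastI /winv map_rcons rev_rcons. Qed.

Lemma size_winv u : size (winv u) = size u.
Proof. by rewrite /winv size_rev size_map. Qed.

Lemma reduce_winv u w : reduce (u ++ winv u ++ w) = reduce w.
Proof.
elim: u w => //= x u IH w.
by rewrite winv_cons -cats1 -catA /= IH /= cons_redK // reduce_reduced.
Qed.

Lemma reduce_winvl u w : reduce (winv u ++ u ++ w) = reduce w.
Proof. by rewrite -{2}(winvK u) reduce_winv. Qed.

Lemma reduced_winv u : reduced u -> reduced (winv u).
Proof.
rewrite /reduced /winv rev_sorted sorted_map.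
by apply: sub_sorted => x y /=; rewrite linvK eq_sym.
Qed.

Definition no_cancel u v :=
  if u is x :: u' then (if v is y :: _ then y != linv (last x u') else true) else true.

Lemma no_cancel_rcons u x y v : no_cancel (rcons u x) (y :: v) = (y != linv x).
Proof. by case: u => //= z u; rewrite last_rcons. Qed.

Lemma reduced_cat u v : reduced (u ++ v) = [&& reduced u, reduced v & no_cancel u v].
Proof.
case: u => [|x u] /=; first by case: v => //= y v; rewrite andbT.
rewrite /reduced /= cat_path; case: v => [|y v] /=; first by rewrite !andbT.
by case: (path _ x u); case: (path _ y v); case: (y != _).
Qed.

Lemma reduced_cat3 u v w : v != [::] ->
  reduced (u ++ v) -> reduced (v ++ w) -> reduced (u ++ v ++ w).
Proof.
case: v => // y v _; rewrite !reduced_cat => /and3P[-> _ Huv] ->.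
by case: u Huv.
Qed.

End Words.

Section FreeGroup.
Variable N : nat.
Implicit Types (a b c g h x y : FN N) (H K : set (FN N)).
Local Notation "a * b" := (mulF a b).
Local Notation one := (oneF N).

Lemma FN_ext a b : sval a = sval b -> a = b.
Proof. exact: val_inj. Qed.

Lemma reduced_sval a : reduced (sval a).
Proof. by case: a. Qed.

Lemma sval_mulF a b : sval (a * b) = reduce (sval a ++ sval b).
Proof. by []. Qed.

Lemma sval_invF a : sval (invF a) = winv (sval a).
Proof. by rewrite /= reduce_id // reduced_winv // (reduced_sval a). Qed.

Lemma mulFA a b c : a * b * c = a * (b * c).
Proof. by apply: FN_ext; rewrite /= reduce_catl reduce_catr catA. Qed.

Lemma mul1F a : one * a = a.
Proof. by apply: FN_ext; rewrite /= reduce_id // (reduced_sval a). Qed.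

Lemma mulF1 a : a * one = a.
Proof. by apply: FN_ext; rewrite /= cats0 reduce_id // (reduced_sval a). Qed.

Lemma mulFV a : a * invF a = one.
Proof.
by apply: FN_ext; rewrite /= reduce_catr -[_ ++ _]cats0 -catA reduce_winv.
Qed.

Lemma mulVF a : invF a * a = one.
Proof.
by apply: FN_ext; rewrite /= reduce_catl -[_ ++ _]cats0 -catA reduce_winvl.
Qed.

Lemma mulKF a b : invF a * (a * b) = b.
Proof. by rewrite -mulFA mulVF mul1F. Qed.

Lemma mulKVF a b : a * (invF a * b) = b.
Proof. by rewrite -mulFA mulFV mul1F. Qed.

Lemma mulFK a b : a * b * invF b = a.
Proof. by rewrite mulFA mulFV mulF1. Qed.

Lemma mulFVK a b : a * invF b * b = a.
Proof. by rewrite mulFA mulVF mulF1. Qed.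

Lemma mulF1_eq a b : a * b = one -> invF a = b.
Proof. by move=> E; rewrite -(mulKF a b) E mulF1. Qed.

Lemma invFK a : invF (invF a) = a.
Proof. by apply: mulF1_eq; rewrite mulVF. Qed.

Lemma invF_mul a b : invF (a * b) = invF b * invF a.
Proof. by apply: mulF1_eq; rewrite mulFA mulKVF mulFV. Qed.

Lemma invF1 : invF one = one.
Proof. by apply: mulF1_eq; rewrite mulF1. Qed.

Definition conjF g x := g * x * invF g.

Lemma conjF_mul g x y : conjF g (x * y) = conjF g x * conjF g y.
Proof. by rewrite /conjF !mulFA mulKF. Qed.

Lemma conjF_inv g x : conjF g (invF x) = invF (conjF g x).
Proof. by rewrite /conjF !invF_mul invFK mulFA. Qed.

Lemma conjF_comp g g' x : conjF g (conjF g' x) = conjF (g * g') x.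
Proof. by rewrite /conjF invF_mul !mulFA. Qed.

Lemma conj1F x : conjF one x = x.
Proof. by rewrite /conjF invF1 mulF1 mul1F. Qed.

Lemma conjF1 g : conjF g one = one.
Proof. by rewrite /conjF mulF1 mulFV. Qed.

Lemma conjFK g : cancel (conjF g) (conjF (invF g)).
Proof. by move=> x; rewrite conjF_comp mulVF conj1F. Qed.

Lemma conjFKV g : cancel (conjF (invF g)) (conjF g).
Proof. by move=> x; rewrite conjF_comp mulFV conj1F. Qed.

Section Subgroup.
Variable H : set (FN N).
Hypothesis sH : subgroup H.

Lemma subgroup1 : H one.
Proof. by case: sH. Qed.

Lemma subgroupV x : H x -> H (invF x).
Proof. by move=> Hx; have := sH.2 _ _ subgroup1 Hx; rewrite mul1F. Qed.

Lemma subgroupM x y : H x -> H y -> H (x * y).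
Proof. by move=> Hx Hy; have := sH.2 _ _ Hx (subgroupV Hy); rewrite invFK. Qed.

End Subgroup.

Lemma subgroupI H K : subgroup H -> subgroup K -> subgroup (H `&` K).
Proof.
move=> sH sK; split; first by split; apply: subgroup1.
by move=> x y [? ?] [? ?]; split; [apply: sH.2|apply: sK.2].
Qed.

Lemma conjS_mem g H h : H h -> conjS g H (conjF g h).
Proof. by move=> Hh; exists h. Qed.

Lemma conjSP g H x : conjS g H x <-> H (conjF (invF g) x).
Proof.
split; first by case=> h Hh <-; rewrite -/(conjF _ _) conjFK.
by move=> Hx; exists (conjF (invF g) x) => //; rewrite -/(conjF _ _) conjFKV.
Qed.

Lemma conjS_comp g g' H : conjS g (conjS g' H) = conjS (g * g') H.
Proof.
by rewrite predeqE => x; rewrite !conjSP conjF_comp -invF_mul.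
Qed.

Lemma conjS1 H : conjS one H = H.
Proof. by apply/seteqP; split=> x; rewrite conjSP invF1 conj1F. Qed.

Lemma conjSK g H : conjS (invF g) (conjS g H) = H.
Proof. by rewrite conjS_comp mulVF conjS1. Qed.

Lemma conjSS g H K : H `<=` K -> conjS g H `<=` conjS g K.
Proof. by move=> HK x [h Hh <-]; exists h => //; apply: HK. Qed.

Lemma conjS_subgroup g H : subgroup H -> subgroup (conjS g H).
Proof.
move=> sH; split; first by apply/conjSP; rewrite conjF1; apply: subgroup1.
move=> x y /conjSP Hx /conjSP Hy; apply/conjSP.
by rewrite conjF_mul conjF_inv; apply: sH.2.
Qed.

Lemma conjS_nontrivial g H : nontrivial H -> nontrivial (conjS g H).
Proof.
case=> h [Hh nh]; exists (conjF g h); split; first exact: conjS_mem.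
by move=> E; apply: nh; rewrite -(conjFK g h) E conjF1.
Qed.

Lemma conjS_id g H : subgroup H -> H g -> conjS g H = H.
Proof.
move=> sH Hg; rewrite predeqE => x; rewrite conjSP /conjF invFK; split=> Hx.
  have := subgroupM sH (subgroupM sH Hg Hx) (subgroupV sH Hg).
  by rewrite !mulFA mulFV mulF1 mulKVF.
exact: (subgroupM sH (subgroupM sH (subgroupV sH Hg) Hx) Hg).
Qed.

End FreeGroup.

Lemma exists_list_choice (T U : Type) (Q : seq T) (P : T -> U -> Prop) :
  exists L : seq U, (forall y, List.In y L -> exists q, List.In q Q /\ P q y) /\
    forall q, List.In q Q -> (exists y, P q y) -> exists y, List.In y L /\ P q y.
Proof.
elim: Q => [|q Q [L [HL HQ]]]; first by exists [::]; split=> // y [].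
have [[y Hy]|Hn] := pselect (exists y, P q y).
  exists (y :: L); split.
    move=> z [<-|/HL [q' [? ?]]]; first by exists q; split=> //; left.
    by exists q'; split=> //; right.
  move=> q' [<-|Hq'] He; first by exists y; split=> //; left.
  by have [z [? ?]] := HQ _ Hq' He; exists z; split=> //; right.
exists L; split=> [z /HL [q' [? ?]]|q' [<-|Hq'] He]; last exact: HQ.
  by exists q'; split=> //; right.
by case: Hn.
Qed.

Section FiniteIndex.
Variable N : nat.
Implicit Types (A B G M H K : set (FN N)).
Local Notation "a * b" := (mulF a b).

Lemma finite_index_refl G : subgroup G -> finite_index G G.
Proof.
move=> sG; exists [:: oneF N]; split=> [x [<-|[]]|g Gg]; first exact: subgroup1.
by exists (oneF N); split; [left|exists g; rewrite mul1F].
Qed.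

Lemma finite_indexS M A G : M `<=` A -> finite_index M G -> finite_index A G.
Proof.
move=> MA [s [Hs Hc]]; exists s; split=> // h /Hc [x [? [k [? ?]]]].
by exists x; split=> //; exists k; split=> //; apply: MA.
Qed.

Lemma finite_index_restrict M A G : subgroup M -> M `<=` A -> A `<=` G ->
  finite_index M G -> finite_index M A.
Proof.
move=> sM MA AG [s [Hs Hc]].
have [L [HL1 HL2]] :=
  exists_list_choice s (fun c a => A a /\ exists2 m, M m & a = c * m).
exists L; split=> [y /HL1 [q [_ []]] //|a Aa].
have [c [Hcs [m [Mm E]]]] := Hc _ (AG _ Aa).
have [|y [Hy [Ay [m' Mm' Ey]]]] := HL2 _ Hcs; first by exists a; split=> //; exists m.
exists y; split=> //; exists (invF m' * m); split.
  by apply: (subgroupM sM) => //; apply: subgroupV.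
by rewrite Ey E mulFA mulKVF.
Qed.

Lemma finite_index_trans M A G : subgroup G -> A `<=` G ->
  finite_index A G -> finite_index M A -> finite_index M G.
Proof.
move=> sG AG [s [Hs Hc]] [t [Ht Hct]].
exists (List.flat_map (fun x => List.map (mulF x) t) s); split.
  move=> z /List.in_flat_map [x [Hx /List.in_map_iff [y [<- Hy]]]].
  by apply: (subgroupM sG); [apply: Hs|apply/AG/Ht].
move=> g /Hc [x [Hx [a [/Hct [y [Hy [m [Mm ->]]]] ->]]]].
exists (x * y); split; last by exists m; split=> //; rewrite mulFA.
by apply/List.in_flat_map; exists x; split=> //; apply/List.in_map_iff; exists y.
Qed.

Lemma finite_indexI A B G : subgroup A -> subgroup B ->
  finite_index A G -> finite_index B G -> finite_index (A `&` B) G.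
Proof.
move=> sA sB [s [Hs Hc]] [t [Ht Hct]].
have [L [HL1 HL2]] := exists_list_choice (List.list_prod s t) (fun p c =>
  G c /\ (exists2 a, A a & c = p.1 * a) /\ (exists2 b, B b & c = p.2 * b)).
exists L; split=> [y /HL1 [q [_ []]] //|g Gg].
have [x [Hx [a [Aa Ea]]]] := Hc _ Gg.
have [y [Hy [b [Bb Eb]]]] := Hct _ Gg.
have Hxy : List.In (x, y) (List.list_prod s t) by apply/List.in_prod.
have [|c [Hc' [Gc [[a' Aa' Ea'] [b' Bb' Eb']]]]] := HL2 _ Hxy.
  by exists g; split=> //; split; [exists a|exists b].
exists c; split=> //; exists (invF c * g); split; last by rewrite mulKVF.
split.
  by rewrite Ea' Ea invF_mul mulFA mulKF; apply: (subgroupM sA) => //; apply: subgroupV.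
by rewrite Eb' Eb invF_mul mulFA mulKF; apply: (subgroupM sB) => //; apply: subgroupV.
Qed.

Lemma finite_index_conj g M G :
  finite_index M G -> finite_index (conjS g M) (conjS g G).
Proof.
move=> [s [Hs Hc]]; exists (List.map (conjF g) s); split.
  by move=> _ /List.in_map_iff [x [<- /Hs]]; apply: conjS_mem.
move=> _ [h /Hc [x [Hx [m [Mm ->]]]] <-].
exists (conjF g x); split; first by apply/List.in_map_iff; exists x.
by exists (conjF g m); split; [apply: conjS_mem|rewrite -/(conjF _ _) conjF_mul].
Qed.

(* Conjugating the common finite-index subgroup [H ∩ K] by [k ∈ K] keeps it of
   finite index in [K], so [H ∩ k (H ∩ K) k^-1] has finite index in [K], hence
   in [H] and in [k H k^-1]. *)
Lemma commensurable_sub_Comm H K : subgroup H -> subgroup K ->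
  finite_index (H `&` K) H -> finite_index (H `&` K) K -> K `<=` Comm H.
Proof.
move=> sH sK fH fK k Kk.
set L := H `&` K; have sL : subgroup L by apply: subgroupI.
set L' := conjS k L; have sL' : subgroup L' by apply: conjS_subgroup.
have L'K : L' `<=` K by rewrite -(conjS_id sK Kk); apply: conjSS => x [].
have fL' : finite_index L' K by rewrite -(conjS_id sK Kk); apply: finite_index_conj.
have fM : finite_index (L `&` L') K by apply: finite_indexI.
have sM : subgroup (L `&` L') by apply: subgroupI.
have ML : L `&` L' `<=` H `&` conjS k H.
  by move=> x [[Hx _] Lx]; split=> //; move: Lx; apply: conjSS => y [].
split; apply: finite_indexS ML _.
  apply: finite_index_trans sH _ fH _; first by move=> x [].
  by apply: finite_index_restrict fM => // x [].
have fL'H : finite_index L' (conjS k H) by apply: finite_index_conj.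
apply: finite_index_trans (conjS_subgroup k sH) _ fL'H _.
  by apply: conjSS => x [].
by apply: finite_index_restrict fM => // x [].
Qed.

Lemma finite_index_sub_Comm A B : subgroup A -> subgroup B -> B `<=` A ->
  finite_index B A -> A `<=` Comm B.
Proof.
move=> sA sB BA fB; apply: commensurable_sub_Comm => //; rewrite setIidl //.
exact: finite_index_refl.
Qed.

End FiniteIndex.

Section Generation.
Variable N : nat.
Implicit Types (K : set (FN N)) (S l : seq (FN N)).
Local Notation "a * b" := (mulF a b).

Definition prodF l := List.fold_right (@mulF N) (oneF N) l.

Definition letters_in S l :=
  forall y, List.In y l -> exists s, List.In s S /\ (y = s \/ y = invF s).

Definition prod_generated K := exists S, (forall s, List.In s S -> K s) /\
  forall b, K b -> exists l, letters_in S l /\ b = prodF l.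

Lemma prodF_cat l1 l2 : prodF (List.app l1 l2) = prodF l1 * prodF l2.
Proof. by elim: l1 => [|y l IH] /=; [rewrite mul1F|rewrite IH mulFA]. Qed.

Lemma invF_prodF l : invF (prodF l) = prodF (List.rev (List.map (@invF N) l)).
Proof.
elim: l => [|y l IH] /=; first by rewrite invF1.
by rewrite invF_mul IH prodF_cat /= mulF1.
Qed.

Lemma conjF_prodF g l : conjF g (prodF l) = prodF (List.map (conjF g) l).
Proof. by elim: l => [|y l IH] /=; rewrite ?conjF1 // conjF_mul IH. Qed.

Lemma letters_in_cat S l1 l2 :
  letters_in S l1 -> letters_in S l2 -> letters_in S (List.app l1 l2).
Proof. by move=> H1 H2 y /List.in_app_iff [/H1|/H2]. Qed.

Lemma letters_in_inv S l :
  letters_in S l -> letters_in S (List.rev (List.map (@invF N) l)).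
Proof.
move=> Hl y; rewrite -List.in_rev => /List.in_map_iff [z [<- /Hl [s [Hs Es]]]].
by exists s; split=> //; case: Es => ->; [right|left; rewrite invFK].
Qed.

Lemma fin_gen_prod_generated K : fin_gen K -> prod_generated K.
Proof.
move=> [S ->]; exists S; split; first by move=> s Hs K' _; apply.
move=> b /(_ [set x | exists l, letters_in S l /\ x = prodF l]); apply.
  split; first by exists [::]; split=> // y [].
  move=> _ _ [l1 [H1 ->]] [l2 [H2 ->]].
  exists (List.app l1 (List.rev (List.map (@invF N) l2))); split.
    by apply: letters_in_cat => //; apply: letters_in_inv.
  by rewrite prodF_cat invF_prodF.
move=> s Hs; exists [:: s]; split; last by rewrite /= mulF1.
by move=> y [<-|[]]; exists s; split=> //; left.
Qed.

Lemma prod_generated_conj g K : prod_generated K -> prod_generated (conjS g K).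
Proof.
move=> [S [HS HK]]; exists (List.map (conjF g) S); split.
  by move=> _ /List.in_map_iff [s [<- /HS]]; apply: conjS_mem.
move=> _ [b /HK [l [Hl ->]] <-].
exists (List.map (conjF g) l); split; last by rewrite -conjF_prodF.
move=> _ /List.in_map_iff [y [<- /Hl [s [Hs Es]]]].
exists (conjF g s); split; first by apply/List.in_map_iff; exists s.
by case: Es => ->; [left|right; rewrite conjF_inv].
Qed.

End Generation.

Section Prefixes.
Variable N : nat.
Implicit Types (K : set (FN N)) (p q t u v : seq (letter N)).
Local Notation "a * b" := (mulF a b).

Lemma reduce_cat_prefix u v : reduced u -> reduced v ->
  forall p (s : seq (letter N)), reduce (u ++ v) = p ++ s ->
  (exists t, u = p ++ t) \/ (exists q t, v = q ++ t /\ p = reduce (u ++ q)).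
Proof.
move=> Hu Hv; elim: u Hu => [|x u IH] Hu p s.
  rewrite /= -/(reduce v) reduce_id // => Ev; right; exists p, s; split=> //.
  by rewrite /= -/(reduce p) reduce_id //; apply: (@reduced_prefix _ p s); rewrite -Ev.
have Hu' : reduced u by move: Hu; rewrite reduced_cons => /andP[].
rewrite cat_cons /= -/(reduce (u ++ v)).
case Ew: (reduce (u ++ v)) => [|y w].
  case: p => [|z [|//]] /=; first by left; exists (x :: u).
  by case=> <- _; left; exists u.
rewrite /=; case: eqP => [Ey|Ey] E.
  have [[t Et]|[q [t [Ev Ep]]]] := IH Hu' (y :: p) s (etrans Ew (congr1 (cons y) E)).
    by move: Hu; rewrite Et Ey /= eqxx.
  by right; exists q, t; split=> //; rewrite -Ep /= Ey eqxx.
case: p E => [|z p] E; first by left; exists (x :: u).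
case: E => <- E.
have [[t Et]|[q [t [Ev Ep]]]] := IH Hu' p s (etrans Ew E).
  by left; exists t; rewrite Et.
right; exists q, t; split=> //; rewrite -Ep.
case: p Ep E => [|z' p'] Ep E //=.
by case: E => <- _; case: eqP.
Qed.

Definition prefixes w : seq (seq (letter N)) :=
  List.map (take^~ w) (List.seq 0 (size w).+1).

Lemma in_prefixes w q t : w = q ++ t -> List.In q (prefixes w).
Proof.
move=> E; apply/List.in_map_iff; exists (size q); split; first by rewrite E take_size_cat.
apply/List.in_seq; rewrite E size_cat; split; first exact/leP.
by apply/ltP; rewrite ltnS leq_addr.
Qed.

Definition prefixes_in_cosets K (Q : seq (seq (letter N))) :=
  forall b, K b -> forall p t, sval b = p ++ t ->
  exists b', K b' /\ exists q, List.In q Q /\ p = reduce (sval b' ++ q).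

(* Q consists of the prefixes of the generators and their inverses: a prefix of
   a product of generators stops inside one of the factors. *)
Lemma prod_generated_prefixes_in_cosets K : subgroup K -> prod_generated K ->
  exists Q, prefixes_in_cosets K Q.
Proof.
move=> sK [S [HS HK]].
pose GS := List.flat_map (fun s => [:: s; invF s]) S.
exists ([::] :: List.flat_map (fun g => prefixes (sval g)) GS).
have inGS y : (exists s, List.In s S /\ (y = s \/ y = invF s)) -> List.In y GS.
  by move=> [s [Hs Es]]; apply/List.in_flat_map; exists s; case: Es => ->; split=> //;
     [left|right; left].
move=> b /HK [l [Hl ->]] {b}.
elim: l Hl => [|y l IH] Hl p t /=.
  case: p => // _; exists (oneF N); split; first exact: subgroup1.
  by exists [::]; split; [left|].
have Ky : K y.
  by have [s [/HS Hs [->|->]]] := Hl _ (or_introl erefl); last apply: subgroupV.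
have Hl' : letters_in S l by move=> z Hz; apply: Hl; right.
move/reduce_cat_prefix => /(_ (reduced_sval _) (reduced_sval _)) [[t' Et']|[q [t' [Eq Ep]]]].
  exists (oneF N); split; first exact: subgroup1.
  exists p; split.
    right; apply/List.in_flat_map; exists y; split; last exact: (in_prefixes Et').
    by apply/inGS/Hl; left.
  rewrite /= -/(reduce p) reduce_id //.
  by apply: (@reduced_prefix _ p t'); rewrite -Et'; apply: reduced_sval.
have [b'' [Kb'' [q' [Hq' Eq']]]] := IH Hl' _ _ Eq.
exists (y * b''); split; first exact: subgroupM.
by exists q'; split=> //; rewrite Ep Eq' reduce_catr /= reduce_catl catA.
Qed.

End Prefixes.

Section Rays.
Variable N : nat.
Implicit Types (x y : letter N) (c u v w : seq (letter N)).
Local Notation "a * b" := (mulF a b).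

Definition cyclically_reduced c := (c != [::]) && reduced (c ++ c).

Lemma cyclically_reduced_reduced c : cyclically_reduced c -> reduced c.
Proof. by case/andP => _ /reduced_prefix. Qed.

Lemma cyclically_reduced_winv c : cyclically_reduced c -> cyclically_reduced (winv c).
Proof.
case/andP => nc rc; apply/andP; split; first by rewrite -size_eq0 size_winv size_eq0.
by rewrite -winv_cat; apply: reduced_winv.
Qed.

Lemma cyclic_decomposition w : reduced w -> w != [::] ->
  exists u c, cyclically_reduced c /\ w = u ++ c ++ winv u.
Proof.
have [n Hn] := ubnP (size w); elim: n w Hn => // n IH [//|x w'] Hn Hw _.
case/lastP: w' Hn Hw => [|m y] Hn Hw.
  by exists [::], [:: x]; rewrite /cyclically_reduced /= /reduced /= linv_neq.
have [Ey|Ey] := eqVneq y (linv x); last first.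
  exists [::], (x :: rcons m y); split; last by rewrite /= cats0.
  by rewrite /cyclically_reduced reduced_cat Hw /= last_rcons -eq_linvC Ey.
subst y; have nm : m != [::] by apply/eqP => Em; move: Hw; rewrite Em /= /reduced /= eqxx.
have rm : reduced m.
  by move: Hw; rewrite -cats1 -cat1s => /reduced_suffix /reduced_prefix.
have [|u [c [cc Em]]] := IH m _ rm nm.
  by move: Hn; rewrite /= size_rcons !ltnS; apply: leq_trans.
by exists (x :: u), c; split=> //; rewrite winv_cons Em -!cats1 -!catA.
Qed.

Fixpoint wpow n c := if n is n'.+1 then c ++ wpow n' c else [::].

Lemma size_wpow n c : size (wpow n c) = (n * size c)%N.
Proof. by elim: n => //= n IH; rewrite size_cat IH mulSn. Qed.

Lemma wpow_add m n c : wpow (m + n) c = wpow m c ++ wpow n c.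
Proof. by elim: m => //= m ->; rewrite catA. Qed.

Lemma size_wpow_geq c n : c != [::] -> n <= size (wpow n c).
Proof.
by rewrite -size_eq0 size_wpow -{1}(muln1 n) leq_mul2l lt0n => ->; rewrite orbT.
Qed.

Lemma reduced_wpow_cat c v n : cyclically_reduced c -> reduced (c ++ v) ->
  reduced (wpow n.+1 c ++ v).
Proof.
move=> /andP[nc rcc] rcv; elim: n => [|n IH] /=; first by rewrite cats0.
by rewrite -!catA; apply: reduced_cat3 => //; rewrite catA.
Qed.

Lemma reduced_cat_wpow_cat u c v n : cyclically_reduced c ->
  reduced (u ++ c) -> reduced (c ++ v) -> reduced (u ++ wpow n.+1 c ++ v).
Proof.
move=> cc ruc rcv; have /andP[nc _] := cc.
by rewrite /= -catA; apply: reduced_cat3 => //; rewrite catA reduced_wpow_cat.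
Qed.

(* The ray [u c c c ...]; the default [d] of [nth] is never reached. *)
Definition ray (d : letter N) u c n := nth d (u ++ wpow n.+1 c) n.

Lemma nth_ray d u c m n : c != [::] -> n < m -> nth d (u ++ wpow m c) n = ray d u c n.
Proof.
move=> nc nm; rewrite /ray -(subnKC nm) wpow_add catA nth_cat size_cat.
by rewrite (leq_trans (size_wpow_geq n.+1 nc)) ?leq_addl.
Qed.

Lemma mkseq_ray d u c k m : c != [::] -> k <= m ->
  mkseq (ray d u c) k = take k (u ++ wpow m c).
Proof.
move=> nc km; apply: (@eq_from_nth _ d).
  rewrite size_mkseq size_takel // size_cat.
  by apply: leq_trans (leq_addl _ _); apply: leq_trans km (size_wpow_geq _ nc).
move=> i; rewrite size_mkseq => ik.
by rewrite nth_mkseq // nth_take // nth_ray // (leq_trans ik km).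
Qed.

Lemma ray_size d y u c : ray d u (y :: c) (size u) = y.
Proof. by rewrite /ray nth_cat ltnn subnn. Qed.

Lemma ray_reduced d u c n : cyclically_reduced c -> reduced (u ++ c) ->
  ray d u c n.+1 != linv (ray d u c n).
Proof.
move=> cc ruc; have /andP[nc _] := cc.
have ru : reduced (u ++ wpow n.+2 c).
  rewrite -[wpow _ _]cats0; apply: reduced_cat_wpow_cat => //.
  by rewrite cats0 cyclically_reduced_reduced.
rewrite -(nth_ray d u nc (ltnSn n.+1)) -(nth_ray d u nc (ltnW (ltnSn n.+1))).
move/(sortedP d): ru; apply; rewrite size_cat.
exact: leq_trans (size_wpow_geq _ nc) (leq_addl _ _).
Qed.

Definition powF (g : FN N) n := iter n (mulF g) (oneF N).

Lemma subgroup_powF H g n : subgroup H -> H g -> H (powF g n).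
Proof. by move=> sH Hg; elim: n => /= [|n IH]; [apply: subgroup1|apply: subgroupM]. Qed.

Lemma sval_powF g u c n : cyclically_reduced c -> sval g = u ++ c ++ winv u ->
  sval (powF g n.+1) = u ++ wpow n.+1 c ++ winv u.
Proof.
move=> cc Eg; have := reduced_sval g; rewrite Eg => rg.
have ruc : reduced (u ++ c) by move: rg; rewrite catA => /reduced_prefix.
have rcu : reduced (c ++ winv u) by move: rg => /reduced_suffix.
elim: n => [|n IH]; first by rewrite /powF [iter _ _ _]/= mulF1 Eg /= cats0.
rewrite [powF _ _]/= sval_mulF -/(powF g n.+1) IH Eg.
have -> : (u ++ c ++ winv u) ++ (u ++ wpow n.+1 c ++ winv u) =
    (u ++ c) ++ (winv u ++ u ++ (wpow n.+1 c ++ winv u)) by rewrite !catA.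
rewrite -reduce_catr reduce_winvl reduce_catr reduce_id; first by rewrite -!catA.
by have := reduced_cat_wpow_cat n.+1 cc ruc rcu; rewrite [wpow n.+2 c]/= !catA.
Qed.

Lemma sval_mul_powF h g u c n : cyclically_reduced c -> sval g = u ++ c ++ winv u ->
  reduced (reduce (sval h ++ u) ++ c) ->
  sval (h * powF g n.+1) = reduce (sval h ++ u) ++ wpow n.+1 c ++ winv u.
Proof.
move=> cc Eg rxc; have := reduced_sval g; rewrite Eg => /reduced_suffix rcu.
rewrite sval_mulF (sval_powF _ cc Eg) catA -reduce_catl reduce_id //.
exact: reduced_cat_wpow_cat.
Qed.

Lemma limsetP (K : set (FN N)) (xi : bdry N) : limset K xi <->
  forall k, exists b, K b /\ take k (sval b) = mkseq (sval xi) k.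
Proof.
split=> [[h [Hh Hc]] k|Hk]; first by have [n0 /(_ n0 (leqnn _))] := Hc k; exists (h n0).
have [f Hf] := choice Hk; exists f; split=> [n|k]; first by case: (Hf n).
exists k => n kn; have [_ E] := Hf n.
rewrite -(take_takel _ kn) E; apply: (@eq_from_nth _ (sval xi 0)).
  by rewrite size_mkseq size_takel // size_mkseq.
move=> i; rewrite size_takel ?size_mkseq // => ik.
by rewrite nth_take // !nth_mkseq // (leq_trans ik kn).
Qed.

Lemma limset_closed (K : set (FN N)) : closedB (limset K).
Proof.
move=> xi Hxi; apply/limsetP => k.
have [e [/limsetP /(_ k) [b [Kb Eb]] Ee]] := Hxi k.
exists b; split=> //; rewrite Eb; apply: (@eq_from_nth _ (sval xi 0)).
  by rewrite !size_mkseq.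
by move=> i; rewrite size_mkseq => ik; rewrite !nth_mkseq //; apply: Ee.
Qed.

(* The ray [h u c c c ...] is the limit of [h g^n] for [g = u c u^-1]. *)
Lemma ray_in_limset H g u c h d : subgroup H -> H g -> H h -> cyclically_reduced c ->
  sval g = u ++ c ++ winv u -> reduced (reduce (sval h ++ u) ++ c) ->
  exists xi : bdry N, limset H xi /\ sval xi = ray d (reduce (sval h ++ u)) c.
Proof.
move=> sH Hg Hh cc Eg rxc; have /andP[nc _] := cc.
exists (exist (fun xi : nat -> letter N => forall n, xi n.+1 != linv (xi n)) _
  (fun n => ray_reduced d n cc rxc)); split=> //.
exists (fun n => h * powF g n.+1); split=> [n|k].
  by apply: subgroupM => //; apply: subgroup_powF.
exists k => n kn.
change (take k (sval (h * powF g n.+1)) = mkseq (ray d (reduce (sval h ++ u)) c) k).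
rewrite (sval_mul_powF _ cc Eg rxc) catA takel_cat.
  by rewrite (@mkseq_ray d _ c k n.+1 nc) // ltnW.
rewrite size_cat (leq_trans _ (leq_addl _ _)) //.
exact: leq_trans kn (leq_trans (leqnSn n) (size_wpow_geq _ nc)).
Qed.

End Rays.

Section LimitSets.
Variable N : nat.
Implicit Types (H K : set (FN N)) (c u w : seq (letter N)).
Local Notation "a * b" := (mulF a b).

Definition FN_of_word w : FN N := exist _ (reduce w) (reduce_reduced w).

Lemma nontrivial_cyclic_decomposition H : nontrivial H ->
  exists g u c, [/\ H g, cyclically_reduced c & sval g = u ++ c ++ winv u].
Proof.
case=> g [Hg ng]; have nw : sval g != [::].
  by apply: contra_notN ng => /eqP Eg; apply: FN_ext; rewrite Eg.
by have [u [c [cc Eg]]] := cyclic_decomposition (reduced_sval g) nw; exists g, u, c.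
Qed.

Lemma no_cancel_or_winv u c : cyclically_reduced c -> no_cancel u c \/ no_cancel u (winv c).
Proof.
case/andP; case: c => // y c _; rewrite reduced_cat => /and3P[_ _ /= ncc].
case/lastP: u => [|u x]; first by left.
rewrite winv_last !no_cancel_rcons; have [Ey|] := eqVneq y (linv x); last by left.
by right; apply: contraNneq ncc => /linv_inj ->; rewrite Ey.
Qed.

(* For [h ∈ H], one of the rays [h u c^oo], [h u (c^-1)^oo] lies in
   [Lambda(H) ⊆ Lambda(K)], so [h u] reduces to a prefix of an element of [K]. *)
Lemma limset_sub_coset H K Q g u c : subgroup H -> H g -> cyclically_reduced c ->
  sval g = u ++ c ++ winv u -> prefixes_in_cosets K Q -> limset H `<=` limset K ->
  forall h, H h -> exists q, List.In q Q /\
    exists k, K k /\ h * FN_of_word u = k * FN_of_word q.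
Proof.
move=> sH Hg cc Eg KQ HK h Hh; set x := reduce (sval h ++ u).
have [c' [g' [Hg' cc' Eg' rxc]]] : exists c' g', [/\ H g', cyclically_reduced c',
    sval g' = u ++ c' ++ winv u & reduced (x ++ c')].
  have rxc c'' : cyclically_reduced c'' -> no_cancel x c'' -> reduced (x ++ c'').
    by move=> cc'' ncx; rewrite reduced_cat reduce_reduced cyclically_reduced_reduced.
  case: (no_cancel_or_winv x cc) => ncx; first by exists c, g; split; rewrite ?rxc.
  exists (winv c), (invF g); split; rewrite ?rxc ?cyclically_reduced_winv //.
    exact: subgroupV.
  by rewrite sval_invF Eg !winv_cat winvK catA.
case: c' cc' Eg' rxc => [/andP[]//|d c1] cc' Eg' rxc.
have [xi [Hxi Exi]] := ray_in_limset d sH Hg' Hh cc' Eg' rxc.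
have [b [Kb Eb]] := (limsetP _ _).1 (HK _ Hxi) (size x).
have Ex : take (size x) (sval b) = x.
  by rewrite Eb Exi -/x (@mkseq_ray _ d x _ _ (size x)) // take_size_cat.
have Eb' : sval b = x ++ drop (size x) (sval b) by rewrite -{1}Ex cat_take_drop.
have [b' [Kb' [q [Hq Eq]]]] := KQ _ Kb _ _ Eb'.
exists q; split=> //; exists b'; split=> //.
by apply: FN_ext; rewrite !sval_mulF /= !reduce_catr -/x Eq.
Qed.

Lemma limset_sub_finite_index H K : subgroup H -> subgroup K -> nontrivial H ->
  prod_generated K -> limset H `<=` limset K -> finite_index (H `&` K) H.
Proof.
move=> sH sK /nontrivial_cyclic_decomposition [g [u [c [Hg cc Eg]]]] gK HK.
have [Q KQ] := prod_generated_prefixes_in_cosets sK gK.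
have Hcoset := limset_sub_coset sH Hg cc Eg KQ HK.
pose ucoset q y := H y /\ exists k, K k /\ y * FN_of_word u = k * FN_of_word q.
have [L [HL1 HL2]] := exists_list_choice Q ucoset.
exists (List.map (@invF N) L); split.
  by move=> _ /List.in_map_iff [y [<- /HL1 [q [_ [Hy _]]]]]; apply: subgroupV.
move=> h Hh; have Hh' := subgroupV sH Hh.
have [q [Hq [k [Kk Ek]]]] := Hcoset _ Hh'.
have [|y [Hy [Hy' [k' [Kk' Ey]]]]] := HL2 _ Hq; first by exists (invF h); split=> //; exists k.
have Kyh : K (y * h).
  have -> : y * h = (y * FN_of_word u) * invF (invF h * FN_of_word u).
    by rewrite invF_mul invFK mulFA mulKVF.
  by rewrite Ey Ek invF_mul -mulFA mulFK; apply: subgroupM => //; apply: subgroupV.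
exists (invF y); split; first by apply/List.in_map_iff; exists y.
by exists (y * h); split; [split=> //; apply: subgroupM|rewrite mulKF].
Qed.

(* The two ends [u c^oo] and [u (c^-1)^oo] of the axis of [u c u^-1] differ
   at position [size u], since [c] is cyclically reduced. *)
Lemma limset_two_points H : subgroup H -> nontrivial H ->
  exists a b, [/\ limset H a, limset H b & a <> b].
Proof.
move=> sH /nontrivial_cyclic_decomposition [g [u [c [Hg cc Eg]]]].
have Eg' : sval (invF g) = u ++ winv c ++ winv u.
  by rewrite sval_invF Eg !winv_cat winvK catA.
have := reduced_sval g; rewrite Eg catA => /reduced_prefix ruc.
have := reduced_sval (invF g); rewrite Eg' catA => /reduced_prefix ruc'.
have Eu : reduce (sval (oneF N) ++ u) = u by rewrite /= reduce_id // (reduced_prefix ruc).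
case: c cc Eg Eg' ruc ruc' => [/andP[]//|d c] cc Eg Eg' ruc ruc'.
have rxc : reduced (reduce (sval (oneF N) ++ u) ++ d :: c) by rewrite Eu.
have rxc' : reduced (reduce (sval (oneF N) ++ u) ++ winv (d :: c)) by rewrite Eu.
have [a [Ha Ea]] := ray_in_limset d sH Hg (subgroup1 sH) cc Eg rxc.
have [b [Hb Eb]] := ray_in_limset d sH (subgroupV sH Hg) (subgroup1 sH)
  (cyclically_reduced_winv cc) Eg' rxc'.
exists a, b; split=> // Eab; have := congr1 (fun xi : bdry N => sval xi (size u)) Eab.
rewrite /= Ea Eb Eu winv_last !ray_size => Edl.
by move: cc; rewrite /cyclically_reduced reduced_cat /= -Edl eqxx !andbF.
Qed.

Lemma limset_CN H : subgroup H -> nontrivial H -> CN (limset H).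
Proof.
move=> sH ntH; split; first exact: limset_closed.
by have [a [b [? ? ?]]] := limset_two_points sH ntH; exists a, b.
Qed.

End LimitSets.

Section Measures.
Variable N : nat.
Implicit Types (H K : set (FN N)).
Local Notation "a * b" := (mulF a b).

Lemma eta_conj g H : eta (conjS g H) = eta H.
Proof.
rewrite /eta; suff -> : [set K | exists g', K = conjS g' (conjS g H)] =
  [set K | exists g', K = conjS g' H] by [].
rewrite predeqE => K; split=> [[x ->]|[y ->]]; first by exists (x * g); rewrite conjS_comp.
by exists (y * invF g); rewrite conjS_comp mulFVK.
Qed.

(* [eta H'] charges the singleton {Lambda(H)} only if some conjugate of [H']
   has limit set Lambda(H), while [eta H] gives it mass at least 1. *)
Lemma eta_limset_conj H H' : eta H [set limset H] = eta H' [set limset H] ->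
  exists g, limset (conjS g H') = limset H.
Proof.
move=> Heta; apply: contrapT => Hn.
have : eta H' [set limset H] = 0%E.
  by apply: esum1 => K [g ->]; rewrite asboolF //= => E; apply: Hn; exists g.
rewrite -Heta /eta (esumID [set H]); last by move=> K _; case: ifP.
have -> : [set K | exists g, K = conjS g H] `&` [set H] = [set H].
  rewrite predeqE => K; split=> [[]//|->]; split=> //.
  by exists (oneF N); rewrite conjS1.
rewrite esum_set1; last by case: ifP.
rewrite asboolT // => E.
have : (1 <= 0 :> \bar Rdefinitions.R)%E.
  by rewrite -E; apply: leeDl; apply: esum_ge0 => K _; case: ifP.
by rewrite Order.TotalTheory.leNgt lte01.
Qed.

End Measures.

Theorem proposition4p7 (N : nat) (H H' : set (FN N)) :
  subgroup H -> subgroup H' ->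
  nontrivial H -> nontrivial H' ->
  fin_gen H -> fin_gen H' ->
  H = Comm H -> H' = Comm H' ->
  ((forall A : set (set (bdry N)), A `<=` @CN N -> eta H A = eta H' A) <->
   exists g : FN N, H' = conjS g H).
Proof.
move=> sH sH' ntH ntH' /fin_gen_prod_generated gH /fin_gen_prod_generated gH' HC H'C.
split=> [Heta|[g ->] A _]; last by rewrite eta_conj.
have CNH : [set limset H] `<=` @CN N by move=> _ ->; apply: limset_CN.
have [g Eg] := eta_limset_conj (Heta _ CNH).
set K := conjS g H'.
have sK : subgroup K := conjS_subgroup g sH'.
have fiH : finite_index (H `&` K) H.
  by apply: limset_sub_finite_index; rewrite ?Eg //; apply: prod_generated_conj.
have fiK : finite_index (H `&` K) K.
  rewrite setIC; apply: limset_sub_finite_index; rewrite ?Eg //.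
  exact: conjS_nontrivial.
have KH : K `<=` H by rewrite HC; apply: commensurable_sub_Comm.
have EH' : H' = conjS (invF g) K by rewrite conjSK.
exists (invF g); apply/seteqP; split; first by rewrite EH'; apply: conjSS.
rewrite H'C; apply: finite_index_sub_Comm => //; first exact: conjS_subgroup.
  by rewrite EH'; apply: conjSS.
by rewrite EH'; apply: finite_index_conj; rewrite -(setIidr KH).
Qed.
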